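(* Let $\theta\sim G$ with bounded support and let $Y$, taking countably many values, have conditional probability mass function $f_\theta$ given $\theta$; let $Y_1,\dots,Y_n$ be i.i.d. with mass function $p_y=P_G(Y=y)=\int f_\theta(y)\,dG(\theta)$. For a sequence $\varepsilon_n\to0$ let $S_n=S_n(\varepsilon_n)=\{y: p_y\ge \varepsilon_n/n\}$, and assume: (i) $P_G(Y\in S_n)=1-o(1/n)$; (ii) for $\varepsilon_n\to0$ sufficiently slowly, $|S_n|=O(\log n)$. Let $n_y=\#\{i:Y_i=y\}$ and $\hat p_y=n_y/n$. Then for every $\alpha>0$, $$\sum_y n_y\log\frac{\hat p_y}{p_y}=o_p\big((\log n)^{1+\alpha}\big).$$
   Context: $\hat F_n$ denotes the empirical distribution of $Y_1,\dots,Y_n$ (the nonparametric MLE); the left-hand side is the log-likelihood ratio $\sum_i\log\big(P_{\hat F_n}(Y_i)/P_G(Y_i)\big)$. Conditions (i)–(ii) are the paper's assumption on $G$ (stated in terms of ''an $o(1)$ function''), which the paper notes holds in its binomial and Poisson sampling scenarios e.g. when the support of $G$ is bounded. *)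

From HB Require Import structures.
From mathcomp Require Import all_boot all_order all_algebra.
From mathcomp Require Import all_classical all_reals all_analysis.
Set Implicit Arguments. Unset Strict Implicit. Unset Printing Implicit Defensive.
Import Order.TTheory GRing.Theory Num.Theory.
Import numFieldNormedType.Exports.
Local Open Scope classical_set_scope.
Local Open Scope ring_scope.

Section Defs.
Variable R : realType.

Definition Sn (p : nat -> R) (eps : nat -> R) (n : nat) : set nat :=
  [set y | eps n / n%:R <= p y].

Definition prob_notS (p : nat -> R) (eps : nat -> R) (n : nat) : \bar R :=
  \esum_(y in ~` Sn p eps n) (p y)%:E.

Definition cnt (n : nat) (w : n.-tuple nat) (y : nat) : nat :=
  count_mem y w.

(* sum_y n_y log(phat_y / p_y), summing over the y with n_y > 0
   (convention 0 log 0 = 0), phat_y = n_y / n *)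
Definition loglik_ratio (p : nat -> R) (n : nat) (w : n.-tuple nat) : R :=
  \sum_(y <- undup w) (cnt w y)%:R * ln (((cnt w y)%:R / n%:R) / p y).

Definition iid_prob (p : nat -> R) (n : nat) (A : set (n.-tuple nat)) : \bar R :=
  \esum_(w in A) (\prod_(i < n) p (tnth w i))%:E.

End Defs.

(* Only the fact that p is a probability mass function enters, together with
   (i) and (ii).  For large n the set S_n is finite, listed by a sequence s of
   length at most C log n, and n P(Y \notin S_n) is small.  On the event that
   every Y_i lies in S_n, the bounds 1 - 1/x <= ln x <= x - 1 give
     0 <= sum_y n_y log(phat_y / p_y) <= X2 + n P(Y \notin S_n),
   where X2 = sum_(y in S_n) (n_y - n p_y)^2 / (n p_y) is Pearson's statistic,
   and E X2 = sum_(y in S_n) (1 - p_y) <= |S_n|.  A union bound for the event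
   that some Y_i falls outside S_n and Markov's inequality for X2 bound the
   probability that the ratio exceeds t = delta (log n)^(1 + alpha) by
   n P(Y \notin S_n) + C log n / (t - 1), which tends to 0. *)

From HB Require Import structures.
From mathcomp Require Import all_boot all_order all_algebra.
From mathcomp Require Import all_classical all_reals all_analysis.
From mathcomp Require Import ring lra measurable_realfun.
Import Order.TTheory GRing.Theory Num.Theory.
Import numFieldNormedType.Exports.
Local Open Scope classical_set_scope.
Local Open Scope ring_scope.

Set Implicit Arguments.
Unset Strict Implicit.
Unset Printing Implicit Defensive.

Lemma esumZl (R : realType) (T : choiceType) (I : set T) (c : R)
    (a : T -> \bar R) :
  0 <= c -> (forall x, 0 <= a x)%E ->
  (\esum_(i in I) (c%:E * a i) = c%:E * \esum_(i in I) a i)%E.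
Proof.
move=> c0 a0; rewrite /esum -ereal_supZl//; last first.
  by apply/set0P; exists 0%E; exists set0; [exact: fsets_set0|rewrite fsbig_set0].
congr ereal_sup; apply/seteqP; split => x /=.
  by move=> [X XI <-]; exists (\sum_(i \in X) a i)%E; [exists X|rewrite ge0_mule_fsumr].
by move=> [y [X XI <-] <-]; exists X => //; rewrite ge0_mule_fsumr.
Qed.

Lemma esum_tuple_prod (R : realType) (T : choiceType) n (g : 'I_n -> T -> R)
    (s : 'I_n -> R) :
  (forall i y, 0 <= g i y) ->
  (forall i, \esum_(y in [set: T]) (g i y)%:E = (s i)%:E) ->
  \esum_(w in [set: n.-tuple T]) (\prod_(i < n) g i (tnth w i))%:E
    = (\prod_(i < n) s i)%:E.
Proof.
elim: n g s => [|n IH] g s g_ge0 g_sum.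
  rewrite big_ord0 (_ : [set: 0.-tuple T] = [set [tuple]]); last first.
    by apply/seteqP; split => // w _; rewrite /= [w]tuple0.
  by rewrite esum_set1 ?big_ord0.
have s_ge0 i : 0 <= s i.
  by rewrite -lee_fin -g_sum esum_ge0 // => y _; rewrite lee_fin.
pose tail (w : n.-tuple T) := \prod_(i < n) g (lift ord0 i) (tnth w i).
have tail_ge0 w : 0 <= tail w by rewrite prodr_ge0.
rewrite (reindex_esum ([set: T] `*`` (fun=> [set: n.-tuple T]))
  _ (fun xw => [tuple of xw.1 :: xw.2])); last first.
  split=> //; first by move=> [x1 w1] [x2 w2] _ _ /= [-> /val_inj ->].
  by move=> w _; case/tupleP: w => x w; exists (x, w).
rewrite (eq_esum (b := fun xw => (g ord0 xw.1)%:E * (tail xw.2)%:E)%E); last first.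
  by move=> [x w] _; rewrite big_ord_recl -EFinM; under eq_bigr do rewrite tnthS.
rewrite -(esum_esum (a := fun x w => (g ord0 x)%:E * (tail w)%:E)%E); last first.
  by move=> *; rewrite -EFinM lee_fin mulr_ge0.
under eq_esum => x _ do rewrite (@esumZl R _ _ (g ord0 x) (fun w => (tail w)%:E)) //
  /tail (IH (fun i => g (lift ord0 i)) (fun i => s (lift ord0 i))) // muleC.
rewrite esumZl ?prodr_ge0 //; last by move=> x; rewrite lee_fin.
by rewrite g_sum big_ord_recl -EFinM mulrC.
Qed.

Section iid_sample.
Variables (R : realType) (T : choiceType) (p : T -> R).
Hypotheses (p_ge0 : forall y, 0 <= p y)
  (p_sum1 : \esum_(y in [set: T]) (p y)%:E = 1%E).

Lemma esum_pred1_mass y : \esum_(x in [set: T]) ((x == y)%:R * p x)%:E = (p y)%:E.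
Proof.
rewrite -(esum_set1 (a := fun x => (p x)%:E)) ?lee_fin // [RHS]esum_mkcond.
apply: eq_esum => x _; have [->|nxy] := eqVneq x y; first by rewrite mem_set // mul1r.
by rewrite memNset ?mul0r //; apply/eqP.
Qed.

Lemma esum_setC_seq (s : seq T) : uniq s ->
  \esum_(y in ~` [set` s]) (p y)%:E = (1 - \sum_(y <- s) p y)%:E.
Proof.
move=> s_uniq; have := esumID [set` s] [set: T] (fun y => (p y)%:E) (fun y _ => p_ge0 y).
rewrite p_sum1 !setTI esum_fset ?finite_seq // => [|y _]; last by rewrite lee_fin.
rewrite -fsbig_seq // sumEFin.
have : (0 <= \esum_(y in ~` [set` s]) (p y)%:E)%E.
  by apply: esum_ge0 => y _; rewrite lee_fin.
case: (\esum_(y in ~` [set` s]) _) => [r| |] //= _; rewrite -EFinD => -[->].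
by congr (_%:E); ring.
Qed.

Lemma esum_notin_seq (s : seq T) : uniq s ->
  \esum_(y in [set: T]) ((y \notin s)%:R * p y)%:E = (1 - \sum_(y <- s) p y)%:E.
Proof.
move=> s_uniq; rewrite -esum_setC_seq // [RHS]esum_mkcond; apply: eq_esum => y _.
rewrite in_setC; case: (boolP (y \in s)) => ys.
  by rewrite mem_set //= mul0r.
by rewrite memNset /= ?mul1r //; apply/negP.
Qed.

Lemma sum_uniq_le1 (s : seq T) : uniq s -> \sum_(y <- s) p y <= 1.
Proof.
move=> s_uniq; rewrite -subr_ge0 -lee_fin -esum_setC_seq //.
by apply: esum_ge0 => y _; rewrite lee_fin.
Qed.

Definition iid_pmf n (w : n.-tuple T) : R := \prod_(i < n) p (tnth w i).

(* Only meaningful for nonnegative F: on summands of both signs \esum is a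
   supremum of finite partial sums, not a sum. *)
Definition iid_mean n (F : n.-tuple T -> R) : \bar R :=
  \esum_(w in [set: n.-tuple T]) (F w * iid_pmf w)%:E.

Lemma iid_pmf_ge0 n (w : n.-tuple T) : 0 <= iid_pmf w.
Proof. exact: prodr_ge0. Qed.

Lemma iid_mean_prod n (h : 'I_n -> T -> R) (s : 'I_n -> R) :
  (forall i y, 0 <= h i y) ->
  (forall i, \esum_(y in [set: T]) (h i y * p y)%:E = (s i)%:E) ->
  iid_mean (fun w => \prod_(i < n) h i (tnth w i)) = (\prod_(i < n) s i)%:E.
Proof.
move=> h_ge0 h_sum; rewrite -(esum_tuple_prod (g := fun i y => h i y * p y)) //.
  by apply: eq_esum => w _; rewrite /iid_pmf -big_split.
by move=> i y; rewrite mulr_ge0.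
Qed.

Lemma iid_mean_prod_in n (A : pred 'I_n) (h : T -> R) (s : R) :
  (forall y, 0 <= h y) -> \esum_(y in [set: T]) (h y * p y)%:E = s%:E ->
  iid_mean (fun w => \prod_(i in A) h (tnth w i)) = (s ^+ #|A|)%:E.
Proof.
move=> h_ge0 h_sum; rewrite -prodr_const big_mkcond /=.
rewrite -(iid_mean_prod (h := fun i => if i \in A then h else fun=> 1)); last 2 first.
- by move=> i y; case: ifP.
- move=> i; case: ifP => // _.
  by rewrite -p_sum1; apply: eq_esum => y _; rewrite mul1r.
by congr iid_mean; apply/funext => w; rewrite big_mkcond; apply: eq_bigr => i _; case: ifP.
Qed.

Lemma iid_mean_tnth n (i : 'I_n) (h : T -> R) (s : R) :
  (forall y, 0 <= h y) -> \esum_(y in [set: T]) (h y * p y)%:E = s%:E ->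
  iid_mean (fun w => h (tnth w i)) = s%:E.
Proof.
move=> h_ge0 h_sum; rewrite -[s]expr1 -(card1 i) -(iid_mean_prod_in _ h_ge0 h_sum).
by congr iid_mean; apply/funext => w; rewrite big_pred1_eq.
Qed.

Lemma iid_mean1 n : iid_mean (fun _ : n.-tuple T => 1) = 1%E.
Proof.
have := @iid_mean_prod_in n predT (fun=> 1) 1 (fun=> ler01).
rewrite expr1n => <-; last first.
  by rewrite -p_sum1; apply: eq_esum => y _; rewrite mul1r.
by congr iid_mean; apply/funext => w; rewrite big1.
Qed.

Lemma iid_meanD n (F G : n.-tuple T -> R) :
  (forall w, 0 <= F w) -> (forall w, 0 <= G w) ->
  iid_mean (fun w => F w + G w) = (iid_mean F + iid_mean G)%E.
Proof.
move=> F_ge0 G_ge0; rewrite /iid_mean -esumD; last 2 first.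
- by move=> w _; rewrite lee_fin mulr_ge0 ?iid_pmf_ge0.
- by move=> w _; rewrite lee_fin mulr_ge0 ?iid_pmf_ge0.
by apply: eq_esum => w _; rewrite mulrDl EFinD.
Qed.

Lemma iid_meanZ n (c : R) (F : n.-tuple T -> R) :
  0 <= c -> (forall w, 0 <= F w) ->
  iid_mean (fun w => c * F w) = (c%:E * iid_mean F)%E.
Proof.
move=> c_ge0 F_ge0; rewrite /iid_mean -esumZl //; last first.
  by move=> w; rewrite lee_fin mulr_ge0 ?iid_pmf_ge0.
by apply: eq_esum => w _; rewrite -mulrA EFinM.
Qed.

Lemma iid_mean_sum n (I : choiceType) (r : seq I) (F : I -> n.-tuple T -> R) :
  (forall j w, 0 <= F j w) ->
  iid_mean (fun w => \sum_(j <- r) F j w) = (\sum_(j <- r) iid_mean (F j))%E.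
Proof.
move=> F_ge0; rewrite /iid_mean -esum_sum; last first.
  by move=> w j _ _; rewrite lee_fin mulr_ge0 ?iid_pmf_ge0.
by apply: eq_esum => w _; rewrite mulr_suml sumEFin.
Qed.

Lemma natr_count_tnth n (a : pred T) (w : n.-tuple T) :
  (count a w)%:R = \sum_(i < n) (a (tnth w i))%:R :> R.
Proof.
rewrite -sum1_count big_tuple natr_sum big_mkcond.
by apply: eq_bigr => i _; case: (a _).
Qed.

Section count.
Variables (a : pred T) (q : R).
Hypothesis a_mass : \esum_(y in [set: T]) ((a y)%:R * p y)%:E = q%:E.

Lemma iid_mean_count n :
  iid_mean (fun w : n.-tuple T => (count a w)%:R) = (n%:R * q)%:E.
Proof.
rewrite (_ : (fun w => _) =
    fun w => \sum_(i <- index_enum 'I_n) (a (tnth w i))%:R); last first.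
  by apply/funext => w; rewrite natr_count_tnth.
rewrite iid_mean_sum //.
under eq_bigr => i _ do rewrite (iid_mean_tnth _ _ a_mass) //.
by rewrite sumEFin sumr_const card_ord mulr_natl.
Qed.

Lemma iid_mean_count_sqr n :
  iid_mean (fun w : n.-tuple T => (count a w)%:R ^+ 2) =
    (n%:R * q + n%:R * (n%:R - 1) * q ^+ 2)%:E.
Proof.
have pair i j (w : n.-tuple T) : (a (tnth w i))%:R * (a (tnth w j))%:R =
    \prod_(k in pred2 i j) (a (tnth w k))%:R :> R.
  have [<-|nij] := eqVneq i j.
    rewrite (eq_bigl (pred1 i)) ?big_pred1_eq => [|k]; last by rewrite !inE orbb.
    by case: (a _); rewrite ?mul1r ?mul0r.
  rewrite (bigD1 i) ?inE ?eqxx //= (bigD1 j) /=; last by rewrite !inE eqxx orbT eq_sym.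
  rewrite big1 ?mulr1 // => k /andP[/andP[]]; rewrite !inE.
  by case/orP => /eqP ->; rewrite eqxx.
rewrite (_ : (fun w => _) = fun w => \sum_(i <- index_enum 'I_n)
    \sum_(j <- index_enum 'I_n) \prod_(k in pred2 i j) (a (tnth w k))%:R); last first.
  apply/funext => w; rewrite natr_count_tnth expr2 big_distrl; apply: eq_bigr => i _.
  by rewrite big_distrr; apply: eq_bigr => j _; exact: pair.
rewrite iid_mean_sum; last by move=> i w; rewrite sumr_ge0 // => j _; rewrite prodr_ge0.
under eq_bigr => i _.
  rewrite iid_mean_sum; last by move=> j w; rewrite prodr_ge0.
  under eq_bigr => j _ do rewrite (iid_mean_prod_in _ _ a_mass) // card2.
  over.
have row (i : 'I_n) : \sum_j q ^+ (i != j).+1 = q + (n%:R - 1) * q ^+ 2.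
  rewrite (bigD1 i) //= eqxx expr1; congr (_ + _).
  rewrite (eq_bigr (fun=> q ^+ 2)) => [|j /negbTE]; last by rewrite eq_sym => ->.
  rewrite sumr_const cardC1 card_ord.
  by case: n i {pair} => [[]//|m] i /=; rewrite -natr1 addrK mulr_natl.
under eq_bigr => i _ do rewrite sumEFin row.
by rewrite sumEFin sumr_const card_ord -mulr_natl; congr (_%:E); ring.
Qed.

Lemma iid_mean_count_var n :
  iid_mean (fun w : n.-tuple T => ((count a w)%:R - n%:R * q) ^+ 2) =
    (n%:R * q * (1 - q))%:E.
Proof.
have q_ge0 : 0 <= q.
  by rewrite -lee_fin -a_mass esum_ge0 // => y _; rewrite lee_fin mulr_ge0.
set V := iid_mean _.
have V_ge0 : (0 <= V)%E.
  by apply: esum_ge0 => w _; rewrite lee_fin mulr_ge0 ?sqr_ge0 ?iid_pmf_ge0.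
(* iid_mean is additive on nonnegative functions only, so take the mean of
   (c - nq)^2 + 2nq c = c^2 + (nq)^2 and cancel the finite term 2nq E c. *)
have : (V + (2 * n%:R * q * (n%:R * q))%:E =
    (n%:R * q + n%:R * (n%:R - 1) * q ^+ 2 + (n%:R * q) ^+ 2)%:E)%E.
  have cnt_ge0 w : 0 <= 2 * n%:R * q * (count a w)%:R :> R by rewrite !mulr_ge0.
  have dev_ge0 w : 0 <= ((count a w)%:R - n%:R * q) ^+ 2 :> R by exact: sqr_ge0.
  have sqr_cnt_ge0 w : 0 <= (count a w)%:R ^+ 2 :> R by exact: sqr_ge0.
  have cst_ge0 w : 0 <= (n%:R * q) ^+ 2 * 1 :> R by rewrite mulr1 sqr_ge0.
  rewrite EFinM -iid_mean_count -iid_meanZ ?mulr_ge0 // /V -iid_meanD //.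
  rewrite EFinD -iid_mean_count_sqr -[X in (_ + X)%E]mule1 -(iid_mean1 n).
  rewrite -iid_meanZ ?sqr_ge0 // -iid_meanD //; [|exact: cst_ge0..].
  by congr iid_mean; apply/funext => w; ring.
move: V_ge0; case: V => [r| |] //= _; rewrite -EFinD => -[E]; congr (_%:E).
by rewrite -[r](addrK (2 * n%:R * q * (n%:R * q))) E; ring.
Qed.

End count.

End iid_sample.

Lemma sum_count_mem (T : eqType) (s w : seq T) : uniq s -> {subset w <= s} ->
  (\sum_(y <- s) count_mem y w)%N = size w.
Proof.
move=> s_uniq; elim: w => [|x w IH] sub_ws; first by rewrite big1.
rewrite big_split /= IH => [|y yw]; last by apply: sub_ws; rewrite inE yw orbT.
have -> : (\sum_(y <- s) (x == y))%N = count_mem x s.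
  by rewrite -sum1_count [RHS]big_mkcond; apply: eq_bigr => y _; rewrite /= eq_sym; case: eqP.
by rewrite count_uniq_mem // sub_ws ?mem_head.
Qed.

Lemma sum_undup_seq (V : nmodType) (T : eqType) (s w : seq T) (F : T -> V) :
  uniq s -> {subset w <= s} -> (forall y, y \notin w -> F y = 0) ->
  \sum_(y <- undup w) F y = \sum_(y <- s) F y.
Proof.
move=> s_uniq sub_ws F0.
rewrite [RHS](bigID (mem w)) /= [X in _ = _ + X]big1 ?addr0 => [|y /F0] //.
rewrite -[RHS]big_filter; apply: perm_big; apply: uniq_perm.
- exact: undup_uniq.
- exact: filter_uniq.
- by move=> y; rewrite mem_undup mem_filter; case: (boolP (y \in w)) => // /sub_ws ->.
Qed.

Section log_bounds.
Variable R : realType.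

Lemma ln_le_subr1 (x : R) : 0 < x -> ln x <= x - 1.
Proof. by move=> x_gt0; have := @le_ln1Dx R (x - 1); rewrite subrKC; apply; lra. Qed.

Lemma mul_ln_div_ge (c m : R) : 0 < c -> 0 < m -> c - m <= c * ln (c / m).
Proof.
move=> c_gt0 m_gt0; rewrite -invf_div lnV ?posrE ?divr_gt0 // mulrN lerNr opprB.
apply: le_trans (ler_wpM2l (ltW c_gt0) (ln_le_subr1 (divr_gt0 m_gt0 c_gt0))) _.
by rewrite mulrBr mulr1 mulrC divfK ?gt_eqF.
Qed.

Lemma mul_ln_div_le (c m : R) : 0 < c -> 0 < m -> c * ln (c / m) <= c ^+ 2 / m - c.
Proof.
move=> c_gt0 m_gt0.
apply: le_trans (ler_wpM2l (ltW c_gt0) (ln_le_subr1 (divr_gt0 c_gt0 m_gt0))) _.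
by rewrite mulrBr mulr1 mulrA -expr2.
Qed.

End log_bounds.

Section loglik_ratio.
Variables (R : realType) (p : nat -> R) (n : nat).
Hypothesis n_gt0 : (0 < n)%N.

Definition pearson_chi2 (s : seq nat) (w : n.-tuple nat) : R :=
  \sum_(y <- s) ((cnt w y)%:R - n%:R * p y) ^+ 2 / (n%:R * p y).

Lemma sum_cnt (s : seq nat) (w : n.-tuple nat) : uniq s -> {subset w <= s} ->
  \sum_(y <- s) (cnt w y)%:R = n%:R :> R.
Proof. by move=> s_uniq sub_ws; rewrite -natr_sum sum_count_mem ?size_tuple. Qed.

Lemma pearson_chi2_ge0 (s : seq nat) (w : n.-tuple nat) :
  (forall y, 0 <= p y) -> 0 <= pearson_chi2 s w.
Proof. by move=> p_ge0; apply: sumr_ge0 => y _; rewrite divr_ge0 ?sqr_ge0 ?mulr_ge0. Qed.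

Lemma cnt_gt0 (w : n.-tuple nat) y : y \in undup w -> 0 < (cnt w y)%:R :> R.
Proof. by rewrite mem_undup ltr0n /cnt -has_pred1 has_count. Qed.

Lemma loglik_ratio_ge0 (w : n.-tuple nat) :
  (forall y, y \in w -> 0 < p y) -> \sum_(y <- undup w) p y <= 1 ->
  0 <= loglik_ratio p w.
Proof.
move=> p_gt0 p_le1; have n_gt0R : 0 < n%:R :> R by rewrite ltr0n.
apply: (@le_trans _ _ (\sum_(y <- undup w) ((cnt w y)%:R - n%:R * p y))).
  rewrite big_split /= sumrN -mulr_sumr sum_cnt ?undup_uniq // => [|y]; last first.
    by rewrite mem_undup.
  by rewrite subr_ge0 -[X in _ <= X]mulr1 ler_wpM2l ?ler0n.
rewrite /loglik_ratio big_seq [X in _ <= X]big_seq; apply: ler_sum => y yw.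
rewrite -mulrA -invfM mul_ln_div_ge ?cnt_gt0 // mulr_gt0 // p_gt0 //.
by rewrite -mem_undup.
Qed.

Lemma loglik_ratio_le_pearson_chi2 (s : seq nat) (w : n.-tuple nat) :
  uniq s -> {subset w <= s} -> (forall y, y \in s -> 0 < p y) ->
  loglik_ratio p w <= pearson_chi2 s w + n%:R * (1 - \sum_(y <- s) p y).
Proof.
move=> s_uniq sub_ws p_gt0; have n_neq0 : n%:R != 0 :> R by rewrite pnatr_eq0 -lt0n.
have chi2E : pearson_chi2 s w = \sum_(y <- s) ((cnt w y)%:R ^+ 2 / (n%:R * p y) - (cnt w y)%:R)
    - \sum_(y <- s) (cnt w y)%:R + n%:R * \sum_(y <- s) p y.
  rewrite /pearson_chi2 -sumrB mulr_sumr -big_split /=; apply: eq_big_seq => y ys.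
  by field; rewrite n_neq0 gt_eqF ?p_gt0.
have : loglik_ratio p w <= \sum_(y <- s) ((cnt w y)%:R ^+ 2 / (n%:R * p y) - (cnt w y)%:R).
  rewrite -(sum_undup_seq s_uniq sub_ws) => [|y yw]; last first.
    by rewrite /cnt (count_memPn yw) expr0n /= mul0r subr0.
  rewrite /loglik_ratio big_seq [X in _ <= X]big_seq; apply: ler_sum => y yw.
  rewrite -mulrA -invfM mul_ln_div_le ?cnt_gt0 // mulr_gt0 ?ltr0n // p_gt0 //.
  by apply: sub_ws; rewrite -mem_undup.
by rewrite chi2E sum_cnt //; lra.
Qed.

End loglik_ratio.

Section loglik_ratio_tail.
Variables (R : realType) (p : nat -> R) (n : nat) (s : seq nat).
Hypotheses (p_ge0 : forall y, 0 <= p y)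
  (p_sum1 : \esum_(y in [set: nat]) (p y)%:E = 1%E)
  (n_gt0 : (0 < n)%N) (s_uniq : uniq s) (p_gt0 : forall y, y \in s -> 0 < p y).

Lemma iid_prob_le_mean (A : set (n.-tuple nat)) (F : n.-tuple nat -> R) :
  (forall w, 0 <= F w) -> (forall w, A w -> 1 <= F w) ->
  (iid_prob p A <= iid_mean p F)%E.
Proof.
move=> F_ge0 AF; rewrite /iid_prob /iid_mean esum_mkcond; apply: le_esum => w _.
case: ifP => [/set_mem Aw|_]; rewrite lee_fin ?mulr_ge0 ?iid_pmf_ge0 //.
by rewrite -[X in X <= _]mul1r ler_wpM2r ?iid_pmf_ge0 ?AF.
Qed.

Lemma iid_mean_pearson_chi2 :
  iid_mean p (pearson_chi2 p s : n.-tuple nat -> R) = (\sum_(y <- s) (1 - p y))%:E.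
Proof.
rewrite (_ : pearson_chi2 p s = fun w => \sum_(y <- s)
    (n%:R * p y)^-1 * ((count (pred1 y) w)%:R - n%:R * p y) ^+ 2); last first.
  by apply/funext => w; apply: eq_bigr => y _; rewrite mulrC.
rewrite (iid_mean_sum p_ge0); last by move=> y w; rewrite mulr_ge0 ?sqr_ge0 ?invr_ge0 ?mulr_ge0.
rewrite -sumEFin big_seq [RHS]big_seq; apply: eq_bigr => y ys.
rewrite (iid_meanZ p_ge0) ?invr_ge0 ?mulr_ge0 //; last by move=> w; exact: sqr_ge0.
rewrite (iid_mean_count_var p_ge0 p_sum1 (esum_pred1_mass p_ge0 y)) -EFinM.
by congr (_%:E); field; rewrite pnatr_eq0 -lt0n n_gt0 gt_eqF ?p_gt0.
Qed.

Lemma loglik_ratio_gt_indicator (t : R) (w : n.-tuple nat) :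
  n%:R * (1 - \sum_(y <- s) p y) <= 1 -> 1 < t -> t < `|loglik_ratio p w| ->
  1 <= (count [pred y | y \notin s] w)%:R + (t - 1)^-1 * pearson_chi2 p s w.
Proof.
move=> small_out t_gt1 tail; have chi2_ge0 := pearson_chi2_ge0 s w p_ge0.
have [out|] := boolP (has [pred y | y \notin s] w).
  have cnt_ge1 : 1 <= (count [pred y | y \notin s] w)%:R :> R.
    by rewrite ler1n -has_count.
  by apply: le_trans cnt_ge1 _; rewrite lerDl mulr_ge0 // invr_ge0 subr_ge0 ltW.
rewrite has_predC negbK => /allP sub_ws.
have LR_ge0 : 0 <= loglik_ratio p w.
  apply: loglik_ratio_ge0 => // [y /sub_ws/p_gt0 //|].
  exact/sum_uniq_le1/undup_uniq.
have := loglik_ratio_le_pearson_chi2 n_gt0 s_uniq sub_ws p_gt0.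
rewrite ger0_norm // in tail => LR_le.
apply: (@le_trans _ _ ((t - 1)^-1 * pearson_chi2 p s w)); last by rewrite lerDr ler0n.
rewrite ler_pdivlMl ?subr_gt0 // mulr1; lra.
Qed.

Lemma iid_prob_loglik_ratio_gt (t : R) :
  n%:R * (1 - \sum_(y <- s) p y) <= 1 -> 1 < t ->
  (iid_prob p [set w : n.-tuple nat | (t < `|loglik_ratio p w|)%R]
    <= (n%:R * (1 - \sum_(y <- s) p y) + (size s)%:R / (t - 1))%:E)%E.
Proof.
move=> small_out t_gt1; have tV_ge0 : 0 <= (t - 1)^-1 by rewrite invr_ge0 subr_ge0 ltW.
have chi2_ge0 (w : n.-tuple nat) := pearson_chi2_ge0 s w p_ge0.
apply: le_trans (iid_prob_le_mean (F := fun w => (count [pred y | y \notin s] w)%:R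
    + (t - 1)^-1 * pearson_chi2 p s w) _ _) _.
- by move=> w; rewrite addr_ge0 ?mulr_ge0.
- by move=> w; exact: loglik_ratio_gt_indicator.
rewrite (iid_meanD p_ge0) => [|//|w]; last by rewrite mulr_ge0.
rewrite (iid_meanZ p_ge0) //.
rewrite (iid_mean_count p_ge0 p_sum1 (esum_notin_seq p_ge0 p_sum1 s_uniq)).
rewrite iid_mean_pearson_chi2 -EFinM -EFinD lee_fin lerD2l mulrC ler_wpM2r //.
by rewrite -sum1_size natr_sum; apply: ler_sum => y _; rewrite lerBlDr lerDl p_ge0.
Qed.

End loglik_ratio_tail.

Lemma mixture_pmf (R : realType) (G : probability R R) (f : R -> nat -> R) (p : nat -> R) :
  (forall th y, 0 <= f th y) ->
  (forall th, (\sum_(y <oo) (f th y)%:E)%E = 1%E) ->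
  (forall y, measurable_fun setT (fun th => f th y)) ->
  (forall y, (p y)%:E = (\int[G]_th (f th y)%:E)%E) ->
  (forall y, 0 <= p y) /\ \esum_(y in [set: nat]) (p y)%:E = 1%E.
Proof.
move=> f_ge0 f_sum1 f_meas pE.
have p_ge0 y : 0 <= p y by rewrite -lee_fin pE integral_ge0 // => th _; rewrite lee_fin.
split => //; rewrite -nneseries_esumT => [|y]; last by rewrite lee_fin.
under eq_eseriesr do rewrite pE.
rewrite -integral_nneseries //; last first.
- by move=> y th _; rewrite lee_fin.
- by move=> y; exact/measurable_EFinP.
under eq_integral do rewrite f_sum1.
by rewrite integral_cst // mul1e; exact: probability_setT.
Qed.

Lemma prob_notS_seq (R : realType) (p eps : nat -> R) n (s : seq nat) :
  (forall y, 0 <= p y) -> \esum_(y in [set: nat]) (p y)%:E = 1%E ->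
  uniq s -> (forall y, y \in s <-> Sn p eps n y) ->
  prob_notS p eps n = (1 - \sum_(y <- s) p y)%:E.
Proof.
move=> p_ge0 p_sum1 s_uniq memS; rewrite -(esum_setC_seq p_ge0 p_sum1 s_uniq).
by rewrite /prob_notS (_ : Sn p eps n = [set` s]) //; apply/seteqP; split => y /memS.
Qed.

Lemma bounded_uniq_enum (T : eqType) (P : T -> Prop) (R : realType) (b : R) :
  (forall s, uniq s -> (forall y, y \in s -> P y) -> (size s)%:R <= b) ->
  exists2 s, uniq s & forall y, y \in s <-> P y.
Proof.
move=> size_le; apply: contrapT => no_enum.
have grow s : uniq s -> (forall y, y \in s -> P y) -> exists2 y, P y & y \notin s.
  move=> s_uniq sP; apply: contrapT => no_new; apply: no_enum; exists s => // y.
  by split=> [/sP //|Py]; apply: contrapT => /negP ys; apply: no_new; exists y.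
have long : forall k, exists s, [/\ uniq s, forall y, y \in s -> P y & size s = k].
  elim=> [|k [s [s_uniq sP size_s]]]; first by exists [::].
  have [x Px xs] := grow s s_uniq sP.
  exists (x :: s); split => /=; [by rewrite xs|move=> z|by rewrite size_s].
  by rewrite inE => /orP[/eqP ->|/sP].
have [s [s_uniq sP size_s]] := long (Num.truncn b).+1.
by have := truncnS_gt b; rewrite -size_s ltNge size_le.
Qed.

Lemma tail_ratio_small (R : realType) (C alpha delta eta L : R) :
  0 < alpha -> 0 < delta -> 0 < eta -> 1 <= L ->
  ((2 * `|C| + 2 * eta) / (eta * delta)) `^ alpha^-1 <= L ->
  1 < delta * L `^ (1 + alpha) /\
  C * L / (delta * L `^ (1 + alpha) - 1) <= eta / 2.
Proof.
move=> alpha_gt0 delta_gt0 eta_gt0 L_ge1 L_large.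
set K := (2 * `|C| + 2 * eta) / (eta * delta).
have C_ge0 := normr_ge0 C.
have K_ge0 : 0 <= K by apply: divr_ge0; [lra|apply: mulr_ge0; lra].
have L_gt0 : 0 < L by lra.
have K_le : K <= L `^ alpha.
  have := @ge0_ler_powR R alpha (ltW alpha_gt0) (K `^ alpha^-1) L.
  rewrite !nnegrE powR_ge0 (ltW L_gt0) -powRrM mulVf ?gt_eqF // powRr1 //.
  exact.
have powR1D : L `^ (1 + alpha) = L * L `^ alpha.
  by rewrite powRD ?powRr1 ?(ltW L_gt0) //; apply/implyP => _; rewrite gt_eqF.
(* K is chosen so that delta K L = (2 |C| / eta + 2) L *)
have t_ge : 2 * `|C| / eta * L + 2 * L <= delta * L `^ (1 + alpha).
  have -> : 2 * `|C| / eta * L + 2 * L = L * (delta * K).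
    by rewrite /K; field; rewrite !gt_eqF.
  by rewrite powR1D mulrCA !ler_pM2l.
have CL_ge0 : 0 <= 2 * `|C| / eta * L.
  by apply: mulr_ge0; [apply: divr_ge0|]; lra.
split; first lra.
rewrite ler_pdivrMr; last lra.
apply: le_trans (ler_wpM2r (ltW L_gt0) (ler_norm C)) _.
have -> : `|C| * L = eta / 2 * (2 * `|C| / eta * L) by field; rewrite gt_eqF.
rewrite ler_wpM2l ?divr_ge0 ?ltW //; lra.
Qed.

Lemma eventually_tail_ratio_small (R : realType) (C alpha delta eta : R) :
  0 < alpha -> 0 < delta -> 0 < eta ->
  \forall n \near \oo, 1 < delta * ln (n%:R : R) `^ (1 + alpha) /\
    C * ln (n%:R : R) / (delta * ln (n%:R : R) `^ (1 + alpha) - 1) <= eta / 2.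
Proof.
move=> alpha_gt0 delta_gt0 eta_gt0.
set M := Num.max 1 (((2 * `|C| + 2 * eta) / (eta * delta)) `^ alpha^-1).
suff: \forall n \near \oo, M <= ln (n%:R : R).
  apply: filterS => n M_le; apply: tail_ratio_small => //.
  - by apply: le_trans M_le; rewrite le_max lexx.
  - by apply: le_trans M_le; rewrite le_max lexx orbT.
apply: filterS (nbhs_infty_gtr (expR M)) => n n_gt.
have n_pos : 0 < n%:R :> R := lt_trans (expR_gt0 M) n_gt.
by rewrite -[M]expRK ler_ln ?posrE ?expR_gt0 // ltW.
Qed.

Theorem proposition1 (R : realType)
  (G : probability R R)                    (* law of theta *)
  (f : R -> nat -> R)                      (* f theta y = P(Y = y | theta) *)
  (p : nat -> R)                           (* p_y = P_G(Y = y) *)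
  (eps : nat -> R) :
  (* G has bounded support *)
  (exists M : R, G [set x | M < `|x|] = 0%E) ->
  (* each f theta is a probability mass function on the countable set nat *)
  (forall th y, 0 <= f th y) ->
  (forall th, (\sum_(y <oo) (f th y)%:E)%E = 1%E) ->
  (forall y, measurable_fun setT (fun th => f th y)) ->
  (* p_y = int f_theta(y) dG(theta) *)
  (forall y, (p y)%:E = (\int[G]_th (f th y)%:E)%E) ->
  (* eps_n -> 0 *)
  eps @ \oo --> 0 ->
  (forall n, 0 < eps n) ->
  (* (i) P_G(Y in S_n) = 1 - o(1/n) *)
  (forall d : R, 0 < d ->
     \forall n \near \oo, (n%:R%:E * prob_notS p eps n <= d%:E)%E) ->
  (* (ii) |S_n| = O(log n) *)
  (exists C : R, \forall n \near \oo, forall s : seq nat,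
     uniq s -> (forall y, y \in s -> Sn p eps n y) ->
     (size s)%:R <= C * ln (n%:R : R)) ->
  (* conclusion: sum_y n_y log(phat_y/p_y) = o_p((log n)^(1+alpha)) *)
  forall alpha : R, 0 < alpha ->
  forall delta eta : R, 0 < delta -> 0 < eta ->
  \forall n \near \oo,
    (iid_prob p [set w : n.-tuple nat |
        (delta * (ln (n%:R : R)) `^ (1 + alpha) < `|loglik_ratio p w|)%R ]
     <= eta%:E)%E.
Proof.
move=> _ f_ge0 f_sum1 f_meas pE _ eps_gt0 out_small [C card_S] alpha alpha_gt0
  delta eta delta_gt0 eta_gt0.
have [p_ge0 p_sum1] := mixture_pmf f_ge0 f_sum1 f_meas pE.
have d_gt0 : 0 < Num.min (eta / 2) 1 by rewrite lt_min ltr01 andbT divr_gt0.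
near=> n.
have n_gt0 : (0 < n)%N by near: n; exact: nbhs_infty_gt.
have [t_gt1 ratio_small] : 1 < delta * ln (n%:R : R) `^ (1 + alpha) /\
    C * ln (n%:R : R) / (delta * ln (n%:R : R) `^ (1 + alpha) - 1) <= eta / 2.
  by near: n; exact: eventually_tail_ratio_small.
have card_Sn : forall s, uniq s -> (forall y, y \in s -> Sn p eps n y) ->
    (size s)%:R <= C * ln (n%:R : R) by near: n.
have [s s_uniq memS] := bounded_uniq_enum card_Sn.
have p_gt0 y : y \in s -> 0 < p y.
  by move/memS; apply: lt_le_trans; rewrite divr_gt0 ?ltr0n.
have : (n%:R%:E * prob_notS p eps n <= (Num.min (eta / 2) 1)%:E)%E.
  by near: n; exact: out_small.
rewrite (prob_notS_seq p_ge0 p_sum1 s_uniq memS) -EFinM lee_fin le_min.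
move=> /andP[out_eta out_1].
apply: le_trans (iid_prob_loglik_ratio_gt p_ge0 p_sum1 n_gt0 s_uniq p_gt0 out_1 t_gt1) _.
have size_le := card_Sn s s_uniq (fun y => (memS y).1).
have tV_gt0 : 0 < (delta * ln (n%:R : R) `^ (1 + alpha) - 1)^-1.
  by rewrite invr_gt0 subr_gt0.
have := ler_wpM2r (ltW tV_gt0) size_le.
rewrite lee_fin; lra.
Unshelve. all: by end_near.
Qed.
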